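(* Let $n\ge 2$ and let $q=e^{i\theta}$ with $\theta\in\mathbb{R}$ and $|\theta|<2\pi/n$ (so $q$ is specialized to a complex number). Then for every $\sigma\in\mathrm{B}_n$, every pole $s\in\mathbb{C}$ of $\zeta(e^{-s},\sigma;\beta_{n,q})$ satisfies $\mathrm{Re}(s)=0$.
   Context: $\mathrm{B}_n$ is the braid group on $n$ strands with standard generators $\sigma_1,\dots,\sigma_{n-1}$. The Burau representation $\beta_{n,q}$ is the homomorphism from $\mathrm{B}_n$ to invertible $n\times n$ matrices over $\mathbb{Z}[q^{\pm1}]$ with $\beta_{n,q}(\sigma_i)=I_{i-1}\oplus\begin{pmatrix}1-q&1\\ q&0\end{pmatrix}\oplus I_{n-i-1}$; for $q\in\mathbb{C}^\times$ it is specialized to complex matrices. The braid zeta function is $\zeta(s,\sigma;\beta_{n,q}):=\det(I_n-\beta_{n,q}(\sigma)s)^{-1}$. *)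

From Stdlib Require Import Reals List Arith.
Open Scope R_scope.

Record Cx := mkC { Re : R; Im : R }.

Definition C0 : Cx := mkC 0 0.
Definition C1 : Cx := mkC 1 0.
Definition Cadd (z w : Cx) : Cx := mkC (Re z + Re w) (Im z + Im w).
Definition Copp (z : Cx) : Cx := mkC (- Re z) (- Im z).
Definition Csub (z w : Cx) : Cx := Cadd z (Copp w).
Definition Cmul (z w : Cx) : Cx :=
  mkC (Re z * Re w - Im z * Im w) (Re z * Im w + Im z * Re w).
Definition Cnorm (z : Cx) : R := sqrt (Re z * Re z + Im z * Im z).
(* multiplicative inverse (Cinv C0 = C0, a junk value) *)
Definition Cinv (z : Cx) : Cx :=
  let d := Re z * Re z + Im z * Im z in mkC (Re z / d) (- Im z / d).
Definition Cexp (z : Cx) : Cx :=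
  mkC (exp (Re z) * cos (Im z)) (exp (Re z) * sin (Im z)).

(* ---------- Square matrices (entries indexed from 0; only indices < n matter) ---------- *)
Definition Mat := nat -> nat -> Cx.

Fixpoint Csum (m : nat) (f : nat -> Cx) : Cx :=
  match m with O => C0 | S k => Cadd (Csum k f) (f k) end.

Definition idM : Mat := fun i j => if Nat.eqb i j then C1 else C0.
Definition mulM (n : nat) (A B : Mat) : Mat :=
  fun i j => Csum n (fun k => Cmul (A i k) (B k j)).
Definition subM (A B : Mat) : Mat := fun i j => Csub (A i j) (B i j).
Definition scaleM (c : Cx) (A : Mat) : Mat := fun i j => Cmul c (A i j).

Definition minor0 (M : Mat) (j : nat) : Mat :=
  fun i k => M (S i) (if Nat.ltb k j then k else S k).

Fixpoint det (n : nat) (M : Mat) : Cx :=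
  match n with
  | O => C1
  | S m => Csum (S m) (fun j =>
             Cmul (if Nat.even j then C1 else Copp C1) (Cmul (M O j) (det m (minor0 M j))))
  end.

(* A letter (k, true) stands for sigma_{k+1}, (k, false) for sigma_{k+1}^{-1}.
   Elements of B_n are represented by words in the generators sigma_1..sigma_{n-1}
   and their inverses, i.e. letters with k < n - 1. *)
Definition letter := (nat * bool)%type.
Definition braid_word := list letter.
Definition valid_word (n : nat) (w : braid_word) : Prop :=
  Forall (fun l => (fst l < n - 1)%nat) w.

(* beta_{n,q}(sigma_{k+1}) = I_k (+) [[1-q, 1],[q, 0]] (+) I_{n-k-2} *)
Definition burau_gen (q : Cx) (k : nat) : Mat := fun i j =>
  if Nat.eqb i k then
    (if Nat.eqb j k then Csub C1 q else if Nat.eqb j (S k) then C1 else C0)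
  else if Nat.eqb i (S k) then
    (if Nat.eqb j k then q else if Nat.eqb j (S k) then C0 else C0)
  else idM i j.

(* beta_{n,q}(sigma_{k+1}^{-1}) = I_k (+) [[1-q, 1],[q, 0]]^{-1} (+) I_{n-k-2},
   where [[1-q,1],[q,0]]^{-1} = [[0, q^{-1}],[1, 1-q^{-1}]] *)
Definition burau_gen_inv (q : Cx) (k : nat) : Mat := fun i j =>
  if Nat.eqb i k then
    (if Nat.eqb j k then C0 else if Nat.eqb j (S k) then Cinv q else C0)
  else if Nat.eqb i (S k) then
    (if Nat.eqb j k then C1 else if Nat.eqb j (S k) then Csub C1 (Cinv q) else C0)
  else idM i j.

Definition burau_letter (q : Cx) (l : letter) : Mat :=
  if snd l then burau_gen q (fst l) else burau_gen_inv q (fst l).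

Definition burau (n : nat) (q : Cx) (w : braid_word) : Mat :=
  fold_right (fun l M => mulM n (burau_letter q l) M) idM w.

Definition braid_zeta (n : nat) (q : Cx) (w : braid_word) (z : Cx) : Cx :=
  Cinv (det n (subM idM (scaleM z (burau n q w)))).

Definition is_pole (f : Cx -> Cx) (s0 : Cx) : Prop :=
  forall M : R, exists delta : R, delta > 0 /\
    forall s : Cx, 0 < Cnorm (Csub s s0) < delta -> Cnorm (f s) > M.

(** Write [q = ω²] with [ω = e^{iθ/2} = c + i s] and use the partial sums
    [P_j = x_0 + ... + x_{j-1}] of a vector [x]. The Burau matrices preserve [P_n] and Squier's
    Hermitian form [Q(x) = Σ_{j<n} (2c|P_{j+1}|² - 2 Re(ω̄ P̄_j P_{j+1}))]: a generator [σ_{k+1}]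
    only moves [P_{k+1}], and the two terms of [Q] containing it are unchanged because [|ω| = 1].
    On [P_n = 0], [Q] is the tridiagonal form with diagonal [2c] and off-diagonal entries of
    modulus 1, whose leading minors are [U_k(c) = sin((k+1)φ)/sin φ], φ = |θ|/2; they are positive because
    [nφ < π], so [Q] is definite there. If [x = z β(σ) x] with [|z| ≠ 1], then [Q(x) = |z|² Q(x)]
    and [P_n = z P_n] force [Q(x) = 0 = P_n], hence [x = 0]. So [det(I - z β(σ))] vanishes only on
    [|z| = 1]; when [Re s ≠ 0], [|e^{-s}| ≠ 1] and by continuity [ζ(e^{-s'})] stays bounded for [s']
    near [s]. *)

From Stdlib Require Import Reals Lra Lia Nsatz.
From mathcomp Require ssreflect ssrfun ssrbool eqtype ssrnat fintype bigop ssralg.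
From mathcomp Require matrix mxalgebra complex Rstruct.
From Pilot Require Import Defs.
Open Scope R_scope.

Definition matvec (n : nat) (M : Mat) (x : nat -> Cx) : nat -> Cx :=
  fun i => Csum n (fun k => Cmul (M i k) (x k)).

(* Transport to MathComp's matrices over [R[i]], where [\det] comes with its kernel theory. *)
Module ToComplex.
Import ssreflect ssrfun ssrbool eqtype ssrnat fintype bigop ssralg.
Import matrix mxalgebra complex Rstruct GRing.Theory.
Local Open Scope ring_scope.

Definition toC (z : Cx) : R[i] := Complex (Defs.Re z) (Defs.Im z).
Definition ofC (z : R[i]) : Cx := mkC (complex.Re z) (complex.Im z).

Lemma toC_inj z w : toC z = toC w -> z = w.
Proof. by case: z => a b; case: w => c d [-> ->]. Qed.

Lemma toC_Csum m f : toC (Csum m f) = \sum_(j < m) toC (f j).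
Proof.
elim: m => [|m IH]; first by rewrite big_ord0.
by rewrite big_ord_recr -IH.
Qed.

Lemma toC_sign j : toC (if Nat.even j then C1 else Copp C1) = (-1) ^+ j.
Proof.
have -> : Nat.even j = ~~ odd j.
  by elim: j => // j IH; rewrite Nat.even_succ -Nat.negb_even IH.
by rewrite -signr_odd; case: (odd j).
Qed.

Lemma toC0 : toC C0 = 0. Proof. by []. Qed.
Lemma toC1 : toC C1 = 1. Proof. by []. Qed.
Lemma toC_add z w : toC (Cadd z w) = toC z + toC w. Proof. by []. Qed.
Lemma toC_sub z w : toC (Csub z w) = toC z - toC w. Proof. by []. Qed.
Lemma toC_mul z w : toC (Cmul z w) = toC z * toC w. Proof. by []. Qed.

Lemma toC_det n (M : Mat) :
  toC (det n M) = \det (\matrix_(i < n, j < n) toC (M i j)).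
Proof.
elim: n M => [|n IH] M; first by rewrite det_mx00.
rewrite (expand_det_row _ ord0) /= -/(Csum n.+1 _) toC_Csum.
apply: eq_bigr => j _.
rewrite !toC_mul IH mxE /cofactor toC_sign add0n mulrA [_ * toC _]mulrC -mulrA.
congr (_ * (_ * \det _)); apply/matrixP => i k; rewrite !mxE /minor0 /= /bump.
case: (ltnP k j) => Hkj.
- by rewrite (proj2 (Nat.ltb_lt k j) (elimT ltP Hkj)) add0n.
- by rewrite (proj2 (Nat.ltb_ge k j) (elimT leP Hkj)) add1n.
Qed.

Lemma det_eq0_kernel n (A : Mat) : det n A = C0 ->
  exists x : nat -> Cx, (exists j, Peano.lt j n /\ x j <> C0) /\
    forall i, Peano.lt i n -> matvec n A x i = C0.
Proof.
move=> A0.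
set Am := \matrix_(i < n, j < n) toC (A i j).
have : \det Am^T == 0 by rewrite det_tr -toC_det A0.
case/det0P => v v_neq0 vA0.
pose x k := if insub k is Some i then ofC (v ord0 i) else C0.
have toC_x (i : 'I_n) : toC (x i) = v ord0 i by rewrite /x valK; case: (v ord0 i).
exists x; split.
- have [j vj_neq0] : exists j, v ord0 j != 0.
    apply/existsP; apply: contraR v_neq0 => /existsPn v0.
    by apply/eqP/matrixP => a b; rewrite (ord1 a) mxE; apply/eqP/negbNE.
  exists j; split; first exact/ltP.
  by move=> xj0; move: vj_neq0; rewrite -toC_x xj0 toC0 eqxx.
- move=> i /ltP lt_in; apply: toC_inj; rewrite toC_Csum toC0.
  have vAi : \sum_j v ord0 j * Am^T j (Ordinal lt_in) = 0.
    by have := congr1 (fun B : 'M_(1, n) => B ord0 (Ordinal lt_in)) vA0; rewrite !mxE.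
  apply: etrans vAi; apply: eq_bigr => k _.
  by rewrite toC_mul toC_x !mxE mulrC.
Qed.

Lemma matvec_mulM n A B x i :
  matvec n (mulM n A B) x i = matvec n A (matvec n B x) i.
Proof.
apply: toC_inj; rewrite /matvec /mulM !toC_Csum.
under eq_bigr => k _ do rewrite toC_mul toC_Csum mulr_suml.
rewrite exchange_big /=; apply: eq_bigr => l _.
rewrite toC_mul toC_Csum mulr_sumr; apply: eq_bigr => k _.
by rewrite !toC_mul mulrA.
Qed.

Lemma Csum_single n f a : Peano.lt a n ->
  (forall j, Peano.lt j n -> j <> a -> f j = C0) -> Csum n f = f a.
Proof.
move=> /ltP lt_an f0; apply: toC_inj; rewrite toC_Csum (bigD1 (Ordinal lt_an)) //=.
rewrite big1 ?addr0 // => j j_neq_a; rewrite f0 //; first exact/ltP.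
by move=> ja; rewrite -val_eqE /= ja eqxx in j_neq_a.
Qed.

Lemma Csum_pair n f a b : Peano.lt a n -> Peano.lt b n -> a <> b ->
  (forall j, Peano.lt j n -> j <> a -> j <> b -> f j = C0) ->
  Csum n f = Cadd (f a) (f b).
Proof.
move=> /ltP lt_an /ltP lt_bn a_neq_b f0; apply: toC_inj; rewrite toC_Csum toC_add.
rewrite (bigD1 (Ordinal lt_an)) //= (bigD1 (Ordinal lt_bn)) /=; last first.
  by rewrite -val_eqE /=; apply/eqP => ab; apply: a_neq_b.
rewrite big1 ?addr0 // => j /andP [j_neq_a j_neq_b]; rewrite f0 //; first exact/ltP.
  by move=> ja; rewrite -val_eqE /= ja eqxx in j_neq_a.
by move=> jb; rewrite -val_eqE /= jb eqxx in j_neq_b.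
Qed.

Lemma matvec_idM n x i : Peano.lt i n -> matvec n idM x i = x i.
Proof.
move=> lt_in; rewrite /matvec (Csum_single _ _ i lt_in).
  by apply: toC_inj; rewrite toC_mul /idM Nat.eqb_refl toC1 mul1r.
move=> j _ ji; apply: toC_inj; rewrite toC_mul /idM toC0.
by rewrite (proj2 (Nat.eqb_neq i j) (nesym ji)) toC0 mul0r.
Qed.

Lemma matvec_I_sub_scale n z B x i : Peano.lt i n ->
  matvec n (subM idM (scaleM z B)) x i = Csub (x i) (Cmul z (matvec n B x i)).
Proof.
move=> lt_in; apply: toC_inj; rewrite toC_sub -(matvec_idM n x i lt_in) /matvec.
rewrite toC_mul !toC_Csum mulr_sumr -sumrB; apply: eq_bigr => k _.
by rewrite /subM /scaleM toC_mul toC_sub !toC_mul mulrBl mulrA.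
Qed.
End ToComplex.

Import ToComplex.

Lemma Cx_ext z w : Re z = Re w -> Im z = Im w -> z = w.
Proof. destruct z, w; simpl; intros; subst; reflexivity. Qed.

Ltac Cx_ring := apply Cx_ext; simpl; ring.

Lemma Csum_ext m f g : (forall j, (j < m)%nat -> f j = g j) -> Csum m f = Csum m g.
Proof.
  induction m as [|m IH]; intros Hfg; simpl; [reflexivity|].
  rewrite IH by (intros; apply Hfg; lia). rewrite Hfg by lia. reflexivity.
Qed.

Lemma Csum_scale m z f : Csum m (fun i => Cmul z (f i)) = Cmul z (Csum m f).
Proof. induction m as [|m IH]; simpl; [Cx_ring|]. rewrite IH. Cx_ring. Qed.

Definition Cnorm2 (z : Cx) : R := Re z * Re z + Im z * Im z.

Lemma Cnorm2_mul z w : Cnorm2 (Cmul z w) = Cnorm2 z * Cnorm2 w.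
Proof. unfold Cnorm2; simpl; ring. Qed.

Lemma Cnorm2_C0 : Cnorm2 C0 = 0.
Proof. unfold Cnorm2; simpl; ring. Qed.

Lemma Cnorm2_eq0 z : Cnorm2 z <= 0 -> z = C0.
Proof. unfold Cnorm2; intros Hz; apply Cx_ext; simpl; nra. Qed.

Lemma Cnorm2_Cinv z : z <> C0 -> Cnorm2 (Cinv z) = / Cnorm2 z.
Proof.
  intros Hz. assert (Hz2 : Cnorm2 z <> 0).
  { intros H0. apply Hz, Cnorm2_eq0. lra. }
  unfold Cnorm2 in *; simpl. field. exact Hz2.
Qed.

Lemma Cmul_fixed_eq0 z a : Cnorm2 z <> 1 -> a = Cmul z a -> a = C0.
Proof.
  intros Hz Ha. apply Cnorm2_eq0.
  assert (Hn : Cnorm2 a = Cnorm2 z * Cnorm2 a) by (rewrite <- Cnorm2_mul, <- Ha; reflexivity).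
  assert (Hn0 : (1 - Cnorm2 z) * Cnorm2 a = 0) by lra.
  apply Rmult_integral in Hn0. destruct Hn0 as [H|H]; [exfalso; apply Hz; lra|lra].
Qed.

Lemma matvec_burau_gen n q k x i : (S (S k) <= n)%nat -> (i < n)%nat ->
  matvec n (burau_gen q k) x i =
  if Nat.eqb i k then Cadd (Cmul (Csub C1 q) (x k)) (x (S k))
  else if Nat.eqb i (S k) then Cmul q (x k) else x i.
Proof.
  intros Hk Hi. unfold matvec, burau_gen.
  destruct (Nat.eqb_spec i k) as [->|Hik]; [|destruct (Nat.eqb_spec i (S k)) as [->|HiSk]].
  - rewrite (Csum_pair n _ k (S k)) by (lia || intros j _ H1 H2;
      rewrite (proj2 (Nat.eqb_neq j k) H1), (proj2 (Nat.eqb_neq j (S k)) H2); Cx_ring).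
    rewrite Nat.eqb_refl, (proj2 (Nat.eqb_neq (S k) k)), Nat.eqb_refl by lia. Cx_ring.
  - rewrite (Csum_single n _ k) by (lia || intros j _ H1;
      rewrite (proj2 (Nat.eqb_neq j k) H1); destruct (Nat.eqb j (S k)); Cx_ring).
    rewrite Nat.eqb_refl. reflexivity.
  - rewrite (Csum_single n _ i) by (lia || intros j _ H1; unfold idM;
      rewrite (proj2 (Nat.eqb_neq i j)) by congruence; Cx_ring).
    unfold idM. rewrite Nat.eqb_refl. Cx_ring.
Qed.

Lemma matvec_burau_gen_inv n q k x i : (S (S k) <= n)%nat -> (i < n)%nat ->
  matvec n (burau_gen_inv q k) x i =
  if Nat.eqb i k then Cmul (Cinv q) (x (S k))
  else if Nat.eqb i (S k) then Cadd (x k) (Cmul (Csub C1 (Cinv q)) (x (S k))) else x i.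
Proof.
  intros Hk Hi. unfold matvec, burau_gen_inv.
  destruct (Nat.eqb_spec i k) as [->|Hik]; [|destruct (Nat.eqb_spec i (S k)) as [->|HiSk]].
  - rewrite (Csum_single n _ (S k)) by (lia || intros j _ H1;
      rewrite (proj2 (Nat.eqb_neq j (S k)) H1); destruct (Nat.eqb j k); Cx_ring).
    rewrite (proj2 (Nat.eqb_neq (S k) k)), Nat.eqb_refl by lia. reflexivity.
  - rewrite (Csum_pair n _ k (S k)) by (lia || intros j _ H1 H2;
      rewrite (proj2 (Nat.eqb_neq j k) H1), (proj2 (Nat.eqb_neq j (S k)) H2); Cx_ring).
    rewrite Nat.eqb_refl, (proj2 (Nat.eqb_neq (S k) k)), Nat.eqb_refl by lia. Cx_ring.
  - rewrite (Csum_single n _ i) by (lia || intros j _ H1; unfold idM;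
      rewrite (proj2 (Nat.eqb_neq i j)) by congruence; Cx_ring).
    unfold idM. rewrite Nat.eqb_refl. Cx_ring.
Qed.

Lemma Csum_local_move n k x y : (S (S k) <= n)%nat ->
  (forall i, (i < n)%nat -> i <> k -> i <> S k -> y i = x i) ->
  Cadd (y k) (y (S k)) = Cadd (x k) (x (S k)) ->
  forall j, (j <= n)%nat -> j <> S k -> Csum j y = Csum j x.
Proof.
  intros Hk Hout Hpair.
  assert (Hlow : forall j, (j <= k)%nat -> Csum j y = Csum j x).
  { induction j as [|j IH]; intros Hj; [reflexivity|].
    simpl. rewrite IH, Hout by lia. reflexivity. }
  induction j as [|j IH]; intros Hj HjSk; [reflexivity|].
  destruct (Nat.eq_dec j (S k)) as [->|HjSk'].
  - simpl. rewrite Hlow by lia.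
    transitivity (Cadd (Csum k x) (Cadd (y k) (y (S k)))); [Cx_ring|].
    rewrite Hpair. Cx_ring.
  - simpl. rewrite IH, Hout by lia. reflexivity.
Qed.

(* [cheb c (S k) = U_k(c)], the Chebyshev polynomials of the second kind. *)
Fixpoint cheb (c : R) (k : nat) : R :=
  match k with
  | O => 0
  | S O => 1
  | S (S k as k') => 2 * c * cheb c k' - cheb c k
  end.

Lemma cheb_SS c k : cheb c (S (S k)) = 2 * c * cheb c (S k) - cheb c k.
Proof. reflexivity. Qed.

Lemma nat_pair_ind (P : nat -> Prop) : P O -> P 1%nat ->
  (forall k, P k -> P (S k) -> P (S (S k))) -> forall k, P k.
Proof.
  intros H0 H1 HS k. enough (P k /\ P (S k)) by tauto.
  induction k as [|k [IH1 IH2]]; auto.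
Qed.

Lemma cheb_1 k : cheb 1 k = INR k.
Proof.
  induction k as [| |k IH1 IH2] using nat_pair_ind; [reflexivity|reflexivity|].
  rewrite cheb_SS, IH1, IH2, !S_INR. ring.
Qed.

Lemma cheb_sin phi k : cheb (cos phi) k * sin phi = sin (INR k * phi).
Proof.
  induction k as [| |k IH1 IH2] using nat_pair_ind.
  - simpl. rewrite Rmult_0_l, Rmult_0_l, sin_0. reflexivity.
  - simpl. rewrite !Rmult_1_l. reflexivity.
  - replace (INR (S (S k)) * phi) with (INR (S k) * phi + phi) by (rewrite !S_INR; ring).
    replace (INR k * phi) with (INR (S k) * phi - phi) in IH1 by (rewrite S_INR; ring).
    rewrite cheb_SS, sin_plus.
    rewrite sin_minus in IH1. nra.
Qed.

Lemma cheb_pos n theta : Rabs theta < 2 * PI / INR n ->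
  forall j, (0 < j <= n)%nat -> 0 < cheb (cos (theta / 2)) j.
Proof.
  intros Hth j Hj.
  assert (HnR : 0 < INR n) by (apply lt_0_INR; lia).
  assert (Hj1 : 1 <= INR j) by (apply (le_INR 1); lia).
  assert (Hjn : INR j <= INR n) by (apply le_INR; lia).
  set (phi := Rabs theta / 2).
  assert (Hc : cos (theta / 2) = cos phi).
  { unfold phi, Rabs. destruct (Rcase_abs theta); [|reflexivity].
    rewrite <- cos_neg. f_equal. field. }
  assert (Hnphi : INR n * phi < PI).
  { unfold phi. apply (Rmult_lt_compat_l (INR n)) in Hth; [|exact HnR].
    replace (INR n * (2 * PI / INR n)) with (2 * PI) in Hth by (field; lra). lra. }
  rewrite Hc. destruct (Req_dec phi 0) as [Hphi0|Hphi0].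
  - rewrite Hphi0, cos_0, cheb_1. lra.
  - assert (Hphi : 0 < phi) by (pose proof (Rabs_pos theta); unfold phi in *; lra).
    assert (Hsin : 0 < sin phi) by (apply sin_gt_0; nra).
    assert (Hsinj : 0 < sin (INR j * phi)) by (apply sin_gt_0; nra).
    rewrite <- cheb_sin in Hsinj. nra.
Qed.

Definition omega_sq (c s : R) : Cx := mkC (c * c - s * s) (2 * c * s).

Section SquierForm.

Variables c s : R.
Hypothesis unit_cs : c * c + s * s = 1.

(* [Re (ω̄ ā b)] with [ω = c + i s] *)
Definition twisted_dot (a b : Cx) : R :=
  c * (Re a * Re b + Im a * Im b) + s * (Re a * Im b - Im a * Re b).

Definition link (a b : Cx) : R := 2 * c * Cnorm2 b - 2 * twisted_dot a b.

Fixpoint chain_form (m : nat) (P : nat -> Cx) : R :=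
  match m with
  | O => 0
  | S k => chain_form k P + link (P k) (P (S k))
  end.

Definition squier_form (n : nat) (x : nat -> Cx) : R := chain_form n (fun j => Csum j x).

Lemma link_C0r a : link a C0 = 0.
Proof. unfold link, Cnorm2, twisted_dot; simpl; ring. Qed.

Lemma link_weighted_nonneg A B a b :
  0 <= A * A * Cnorm2 a + B * B * Cnorm2 b - 2 * A * B * twisted_dot a b.
Proof.
  unfold Cnorm2, twisted_dot.
  set (u := A * Re a - B * (c * Re b + s * Im b)).
  set (v := A * Im a - B * (c * Im b - s * Re b)).
  assert (E : A * A * (Re a * Re a + Im a * Im a) + B * B * (Re b * Re b + Im b * Im b)
     - 2 * A * B * (c * (Re a * Re b + Im a * Im b) + s * (Re a * Im b - Im a * Re b))
     = u * u + v * v) by (unfold u, v; nsatz).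
  rewrite E. nra.
Qed.

Lemma chain_form_lower_bound k (u : nat -> Cx) : u O = C0 ->
  (forall j, (0 < j <= k)%nat -> 0 < cheb c j) ->
  cheb c (S k) * Cnorm2 (u k) <= cheb c k * chain_form k u.
Proof.
  intros Hu0. induction k as [|k IH]; intros Hpos.
  - rewrite Hu0, Cnorm2_C0. simpl. lra.
  - destruct k as [|k].
    + simpl. unfold link. rewrite Hu0. unfold twisted_dot; simpl. lra.
    + specialize (IH ltac:(intros; apply Hpos; lia)).
      assert (Hk1 : 0 < cheb c (S k)) by (apply Hpos; lia).
      assert (Hk2 : 0 < cheb c (S (S k))) by (apply Hpos; lia).
      pose proof (link_weighted_nonneg (cheb c (S (S k))) (cheb c (S k))
        (u (S k)) (u (S (S k)))) as Hsos.
      change (chain_form (S (S k)) u) with (chain_form (S k) u + link (u (S k)) (u (S (S k)))).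
      rewrite (cheb_SS c (S k)). unfold link.
      set (Q := chain_form (S k) u) in *.
      set (X := cheb c (S (S k)) * (Q + (2 * c * Cnorm2 (u (S (S k)))
                  - 2 * twisted_dot (u (S k)) (u (S (S k)))))
                - (2 * c * cheb c (S (S k)) - cheb c (S k)) * Cnorm2 (u (S (S k)))).
      (* [U_k] times the slack [X] is [U_(k+1)] times the induction hypothesis plus a square *)
      assert (HIH : 0 <= cheb c (S (S k)) * (cheb c (S k) * Q - cheb c (S (S k)) * Cnorm2 (u (S k))))
        by (apply Rmult_le_pos; lra).
      assert (HX : 0 <= cheb c (S k) * X) by (unfold X; nra).
      assert (0 <= X) by (destruct (Rlt_or_le X 0); nra).
      unfold X in *. lra.
Qed.

Lemma chain_form_eq0 k (u : nat -> Cx) : u O = C0 ->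
  (forall j, (0 < j <= S k)%nat -> 0 < cheb c j) -> chain_form k u = 0 ->
  forall j, (j <= k)%nat -> u j = C0.
Proof.
  intros Hu0. induction k as [|k IH]; intros Hpos Hk0 j Hj.
  - replace j with O by lia. exact Hu0.
  - assert (HuSk : u (S k) = C0).
    { pose proof (chain_form_lower_bound (S k) u Hu0 ltac:(intros; apply Hpos; lia)) as Hlb.
      assert (0 < cheb c (S (S k))) by (apply Hpos; lia).
      rewrite Hk0, Rmult_0_r in Hlb. apply Cnorm2_eq0. nra. }
    destruct (Nat.eq_dec j (S k)) as [->|Hjk]; [exact HuSk|].
    apply IH; [intros; apply Hpos; lia| |lia].
    simpl in Hk0. rewrite HuSk, link_C0r in Hk0. lra.
Qed.

Lemma chain_form_ext m P P' : (forall j, (j <= m)%nat -> P' j = P j) ->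
  chain_form m P' = chain_form m P.
Proof.
  induction m as [|m IH]; intros HP; simpl; [reflexivity|].
  rewrite IH by (intros; apply HP; lia). rewrite !HP by lia. reflexivity.
Qed.

Lemma chain_form_local m k P P' : (S k < m)%nat ->
  (forall j, (j <= m)%nat -> j <> S k -> P' j = P j) ->
  link (P k) (P' (S k)) + link (P' (S k)) (P (S (S k))) =
  link (P k) (P (S k)) + link (P (S k)) (P (S (S k))) ->
  chain_form m P' = chain_form m P.
Proof.
  intros Hm HP Hloc. induction m as [|m IH]; [lia|].
  destruct (Nat.eq_dec m (S k)) as [->|Hm'].
  - simpl. rewrite (chain_form_ext k P P') by (intros; apply HP; lia).
    rewrite (HP k), (HP (S (S k))) by lia. lra.
  - simpl. rewrite IH by (lia || intros; apply HP; lia). rewrite !HP by lia. reflexivity.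
Qed.

Lemma squier_form_local_move n k x y : (S (S k) <= n)%nat ->
  (forall i, (i < n)%nat -> i <> k -> i <> S k -> y i = x i) ->
  Cadd (y k) (y (S k)) = Cadd (x k) (x (S k)) ->
  link (Csum k x) (Cadd (Csum k x) (y k))
    + link (Cadd (Csum k x) (y k)) (Cadd (Cadd (Csum k x) (x k)) (x (S k))) =
  link (Csum k x) (Cadd (Csum k x) (x k))
    + link (Cadd (Csum k x) (x k)) (Cadd (Cadd (Csum k x) (x k)) (x (S k))) ->
  squier_form n y = squier_form n x /\ Csum n y = Csum n x.
Proof.
  intros Hk Hout Hpair Hloc.
  pose proof (Csum_local_move n k x y Hk Hout Hpair) as Hsums.
  split; [|apply Hsums; lia].
  apply (chain_form_local n k); [lia|exact Hsums|].
  change (Csum (S k) y) with (Cadd (Csum k y) (y k)). rewrite Hsums by lia. exact Hloc.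
Qed.

Lemma link_scale z a b : link (Cmul z a) (Cmul z b) = Cnorm2 z * link a b.
Proof. unfold link, Cnorm2, twisted_dot; simpl; ring. Qed.

Lemma chain_form_scale m z P :
  chain_form m (fun j => Cmul z (P j)) = Cnorm2 z * chain_form m P.
Proof. induction m as [|m IH]; simpl; [ring|]. rewrite IH, link_scale. ring. Qed.

Lemma squier_form_scale n z x :
  squier_form n (fun i => Cmul z (x i)) = Cnorm2 z * squier_form n x.
Proof.
  unfold squier_form. rewrite <- chain_form_scale.
  apply chain_form_ext. intros j _. apply Csum_scale.
Qed.

Lemma squier_form_ext n x y : (forall i, (i < n)%nat -> y i = x i) ->
  squier_form n y = squier_form n x /\ Csum n y = Csum n x.
Proof.
  intros Hxy.
  assert (Hsums : forall j, (j <= n)%nat -> Csum j y = Csum j x)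
    by (intros j Hj; apply Csum_ext; intros; apply Hxy; lia).
  split; [apply chain_form_ext, Hsums|apply Hsums; lia].
Qed.

Lemma Cinv_omega_sq : Cinv (omega_sq c s) = mkC (c * c - s * s) (- (2 * c * s)).
Proof.
  unfold Cinv, omega_sq; simpl.
  replace ((c * c - s * s) * (c * c - s * s) + 2 * c * s * (2 * c * s)) with 1 by nsatz.
  apply Cx_ext; simpl; field.
Qed.

Lemma link_move_gen p a b :
  link p (Cadd p (Cadd (Cmul (Csub C1 (omega_sq c s)) a) b))
    + link (Cadd p (Cadd (Cmul (Csub C1 (omega_sq c s)) a) b)) (Cadd (Cadd p a) b) =
  link p (Cadd p a) + link (Cadd p a) (Cadd (Cadd p a) b).
Proof. destruct p, a, b. unfold link, Cnorm2, twisted_dot, omega_sq; simpl. nsatz. Qed.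

Lemma link_move_gen_inv p a b :
  link p (Cadd p (Cmul (Cinv (omega_sq c s)) b))
    + link (Cadd p (Cmul (Cinv (omega_sq c s)) b)) (Cadd (Cadd p a) b) =
  link p (Cadd p a) + link (Cadd p a) (Cadd (Cadd p a) b).
Proof.
  rewrite Cinv_omega_sq. destruct p, a, b.
  unfold link, Cnorm2, twisted_dot; simpl. nsatz.
Qed.

Lemma squier_form_burau_letter n l x : (S (fst l) < n)%nat ->
  squier_form n (matvec n (burau_letter (omega_sq c s) l) x) = squier_form n x /\
  Csum n (matvec n (burau_letter (omega_sq c s) l) x) = Csum n x.
Proof.
  destruct l as [k []]; simpl; intros Hk; unfold burau_letter; simpl;
    apply (squier_form_local_move n k); try lia.
  - intros i Hi Hik HiSk. rewrite matvec_burau_gen by lia.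
    rewrite (proj2 (Nat.eqb_neq i k) Hik), (proj2 (Nat.eqb_neq i (S k)) HiSk). reflexivity.
  - rewrite !matvec_burau_gen by lia.
    rewrite Nat.eqb_refl, (proj2 (Nat.eqb_neq (S k) k)), Nat.eqb_refl by lia. Cx_ring.
  - rewrite matvec_burau_gen, Nat.eqb_refl by lia. apply link_move_gen.
  - intros i Hi Hik HiSk. rewrite matvec_burau_gen_inv by lia.
    rewrite (proj2 (Nat.eqb_neq i k) Hik), (proj2 (Nat.eqb_neq i (S k)) HiSk). reflexivity.
  - rewrite !matvec_burau_gen_inv by lia.
    rewrite Nat.eqb_refl, (proj2 (Nat.eqb_neq (S k) k)), Nat.eqb_refl by lia. Cx_ring.
  - rewrite matvec_burau_gen_inv, Nat.eqb_refl by lia. apply link_move_gen_inv.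
Qed.

Lemma squier_form_burau n w x : valid_word n w ->
  squier_form n (matvec n (burau n (omega_sq c s) w) x) = squier_form n x /\
  Csum n (matvec n (burau n (omega_sq c s) w) x) = Csum n x.
Proof.
  induction w as [|l w IH]; intros Hw.
  - apply squier_form_ext. intros i Hi. apply matvec_idM. exact Hi.
  - inversion Hw as [|? ? Hl Hw']; subst.
    destruct (IH Hw') as [HQw HSw].
    set (Bx := matvec n (burau n (omega_sq c s) w) x) in *.
    destruct (squier_form_ext n (matvec n (burau_letter (omega_sq c s) l) Bx)
      (matvec n (burau n (omega_sq c s) (l :: w)) x)) as [HQmul HSmul].
    { intros i _. apply matvec_mulM. }
    destruct (squier_form_burau_letter n l Bx) as [HQl HSl]; [lia|].
    rewrite HQmul, HQl, HQw, HSmul, HSl, HSw. split; reflexivity.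
Qed.

Lemma burau_eigvec_eq0 n w z x : valid_word n w ->
  (forall j, (0 < j <= n)%nat -> 0 < cheb c j) -> Cnorm2 z <> 1 ->
  (forall i, (i < n)%nat -> x i = Cmul z (matvec n (burau n (omega_sq c s) w) x i)) ->
  forall i, (i < n)%nat -> x i = C0.
Proof.
  intros Hw Hpos Hz Hx.
  set (y := matvec n (burau n (omega_sq c s) w) x) in *.
  destruct (squier_form_burau n w x Hw) as [HQy HSy]. fold y in HQy, HSy.
  destruct (squier_form_ext n x (fun i => Cmul z (y i))) as [HQx HSx].
  { intros i Hi. symmetry. exact (Hx i Hi). }
  rewrite squier_form_scale, HQy in HQx. rewrite Csum_scale, HSy in HSx.
  assert (Hsum0 : Csum n x = C0) by (apply (Cmul_fixed_eq0 z); auto).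
  assert (HQ0 : squier_form n x = 0).
  { assert (H : (1 - Cnorm2 z) * squier_form n x = 0) by lra.
    apply Rmult_integral in H. destruct H; [exfalso; apply Hz; lra|assumption]. }
  destruct n as [|m]; [intros; lia|].
  assert (Hsums : forall j, (j <= S m)%nat -> Csum j x = C0).
  { intros j Hj. destruct (Nat.eq_dec j (S m)) as [->|Hjm]; [exact Hsum0|].
    apply (chain_form_eq0 m (fun j => Csum j x)); [reflexivity|exact Hpos| |lia].
    change (chain_form m (fun j => Csum j x) + link (Csum m x) (Csum (S m) x) = 0) in HQ0.
    rewrite Hsum0, link_C0r in HQ0. lra. }
  intros i Hi.
  transitivity (Csub (Csum (S i) x) (Csum i x)); [simpl; Cx_ring|].
  rewrite !Hsums by lia. Cx_ring.
Qed.

Lemma det_I_sub_burau_neq0 n w z : valid_word n w ->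
  (forall j, (0 < j <= n)%nat -> 0 < cheb c j) -> Cnorm2 z <> 1 ->
  det n (subM idM (scaleM z (burau n (omega_sq c s) w))) <> C0.
Proof.
  intros Hw Hpos Hz Hdet.
  destruct (det_eq0_kernel n _ Hdet) as [x [[j [Hj Hxj]] Hker]].
  apply Hxj, (burau_eigvec_eq0 n w z x Hw Hpos Hz); [|exact Hj].
  intros i Hi. specialize (Hker i Hi). rewrite matvec_I_sub_scale in Hker by exact Hi.
  apply Cx_ext; [apply (f_equal Re) in Hker|apply (f_equal Im) in Hker]; simpl in *; lra.
Qed.

End SquierForm.

Definition Ccont_at (f : R -> Cx) (t0 : R) : Prop :=
  continuity_pt (fun t => Re (f t)) t0 /\ continuity_pt (fun t => Im (f t)) t0.

Lemma Ccont_const a t0 : Ccont_at (fun _ => a) t0.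
Proof. split; apply continuity_pt_const; intros ? ?; reflexivity. Qed.

Lemma Ccont_add f g t0 :
  Ccont_at f t0 -> Ccont_at g t0 -> Ccont_at (fun t => Cadd (f t) (g t)) t0.
Proof. intros [Hf1 Hf2] [Hg1 Hg2]. split; apply continuity_pt_plus; assumption. Qed.

Lemma Ccont_sub f g t0 :
  Ccont_at f t0 -> Ccont_at g t0 -> Ccont_at (fun t => Csub (f t) (g t)) t0.
Proof.
  intros [Hf1 Hf2] [Hg1 Hg2].
  split; apply continuity_pt_plus; try apply continuity_pt_opp; assumption.
Qed.

Lemma Ccont_mul f g t0 :
  Ccont_at f t0 -> Ccont_at g t0 -> Ccont_at (fun t => Cmul (f t) (g t)) t0.
Proof.
  intros [Hf1 Hf2] [Hg1 Hg2].
  split; [apply continuity_pt_minus|apply continuity_pt_plus];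
    apply continuity_pt_mult; assumption.
Qed.

Lemma Ccont_Csum m (F : nat -> R -> Cx) t0 : (forall j, Ccont_at (F j) t0) ->
  Ccont_at (fun t => Csum m (fun j => F j t)) t0.
Proof.
  intros HF. induction m as [|m IH]; [exact (Ccont_const C0 t0)|].
  exact (Ccont_add _ (F m) t0 IH (HF m)).
Qed.

Lemma Ccont_det t0 n (M : R -> Mat) : (forall i j, Ccont_at (fun t => M t i j) t0) ->
  Ccont_at (fun t => det n (M t)) t0.
Proof.
  revert M. induction n as [|n IH]; intros M HM; [exact (Ccont_const C1 t0)|].
  apply (Ccont_Csum (S n) (fun j t => Cmul (if Nat.even j then C1 else Copp C1)
    (Cmul (M t O j) (det n (minor0 (M t) j))))).
  intros j. apply Ccont_mul; [apply Ccont_const|apply Ccont_mul; [apply HM|]].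
  apply (IH (fun t => minor0 (M t) j)). intros i k. apply HM.
Qed.

Lemma Ccont_Cexp_opp_shift s0 : Ccont_at (fun t => Cexp (Copp (mkC (Re s0 + t) (Im s0)))) 0.
Proof. unfold Cexp; split; simpl; reg. Qed.

Lemma Cnorm_Cinv_le z m : 0 < m -> m <= Cnorm2 z -> Cnorm (Cinv z) <= sqrt (/ m).
Proof.
  intros Hm Hz. assert (Hz0 : z <> C0) by (intros E; rewrite E, Cnorm2_C0 in Hz; lra).
  unfold Cnorm. fold (Cnorm2 (Cinv z)). rewrite Cnorm2_Cinv by exact Hz0.
  apply sqrt_le_1_alt, Rinv_le_contravar; assumption.
Qed.

Lemma Cnorm_shift_Re s0 t : 0 <= t -> Cnorm (Csub (mkC (Re s0 + t) (Im s0)) s0) = t.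
Proof.
  intros Ht. unfold Cnorm; simpl.
  replace ((Re s0 + t + - Re s0) * (Re s0 + t + - Re s0) + (Im s0 + - Im s0) * (Im s0 + - Im s0))
    with (t * t) by ring.
  apply sqrt_square, Ht.
Qed.

(* Approaching [s0] along the real direction already refutes [is_pole]. *)
Lemma not_pole_Cinv (D : Cx -> Cx) s0 :
  Ccont_at (fun t => D (mkC (Re s0 + t) (Im s0))) 0 -> D s0 <> C0 ->
  ~ is_pole (fun s => Cinv (D s)) s0.
Proof.
  intros [HRe HIm] HD Hpole.
  set (g t := D (mkC (Re s0 + t) (Im s0))) in *.
  assert (Hg0 : g 0 = D s0) by (unfold g; rewrite Rplus_0_r; destruct s0; reflexivity).
  set (N0 := Cnorm2 (D s0)).
  assert (HN0 : 0 < N0).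
  { destruct (Rlt_or_le 0 N0) as [H|H]; [exact H|]. exfalso. apply HD, Cnorm2_eq0, H. }
  assert (Hcont : continuity_pt (fun t => Cnorm2 (g t)) 0)
    by (unfold Cnorm2; apply continuity_pt_plus; apply continuity_pt_mult; assumption).
  destruct (Hcont (N0 / 2)) as [d1 [Hd1 Hnear]]; [lra|].
  destruct (Hpole (sqrt (/ (N0 / 2)))) as [d2 [Hd2 Hfar]].
  set (t := Rmin d1 d2 / 2).
  assert (Ht : 0 < t /\ t < d1 /\ t < d2)
    by (pose proof (Rmin_l d1 d2); pose proof (Rmin_r d1 d2);
        pose proof (Rmin_pos d1 d2 Hd1 Hd2); unfold t; lra).
  assert (Htd1 : R_dist t 0 < d1) by (unfold R_dist; rewrite Rminus_0_r, Rabs_right; lra).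
  specialize (Hnear t (conj (conj I (Rlt_not_eq 0 t (proj1 Ht))) Htd1)).
  unfold R_dist in Hnear. rewrite Hg0 in Hnear. apply Rabs_def2 in Hnear.
  specialize (Hfar (mkC (Re s0 + t) (Im s0))).
  rewrite Cnorm_shift_Re in Hfar by lra. specialize (Hfar ltac:(lra)). fold (g t) in Hfar.
  apply (Rlt_irrefl (sqrt (/ (N0 / 2)))), (Rlt_le_trans _ _ _ Hfar).
  fold N0 in Hnear. apply Cnorm_Cinv_le; lra.
Qed.

Lemma Cexp_imag theta : Cexp (mkC 0 theta) = omega_sq (cos (theta / 2)) (sin (theta / 2)).
Proof.
  unfold Cexp, omega_sq; simpl. rewrite exp_0, !Rmult_1_l.
  set (h := theta / 2). replace theta with (2 * h) by (unfold h; field).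
  rewrite cos_2a, sin_2a. apply Cx_ext; simpl; ring.
Qed.

Lemma Cnorm2_Cexp_neq1 z : Re z <> 0 -> Cnorm2 (Cexp z) <> 1.
Proof.
  intros Hz E. unfold Cnorm2, Cexp in E; simpl in E.
  pose proof (sin2_cos2 (Im z)) as Hsc. unfold Rsqr in Hsc.
  assert (E' : exp (Re z + Re z) = exp 0) by (rewrite exp_plus, exp_0; nra).
  apply exp_inv in E'. lra.
Qed.

Theorem theorem1p2 (n : nat) (theta : R) (w : braid_word) :
  (2 <= n)%nat ->
  Rabs theta < 2 * PI / INR n ->
  valid_word n w ->
  forall s : Cx,
    is_pole (fun s' => braid_zeta n (Cexp (mkC 0 theta)) w (Cexp (Copp s'))) s ->
    Re s = 0.
Proof.
  intros _ Htheta Hw s Hpole.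
  destruct (Req_dec (Re s) 0) as [Hre|Hre]; [exact Hre|exfalso].
  unfold braid_zeta in Hpole. rewrite Cexp_imag in Hpole.
  set (c := cos (theta / 2)) in *. set (sn := sin (theta / 2)) in *.
  assert (Hcs : c * c + sn * sn = 1)
    by (pose proof (sin2_cos2 (theta / 2)) as H; unfold Rsqr in H; unfold c, sn; lra).
  revert Hpole. apply not_pole_Cinv.
  - apply Ccont_det. intros i j. unfold subM, scaleM.
    apply Ccont_sub, Ccont_mul; [apply Ccont_const|apply Ccont_Cexp_opp_shift|apply Ccont_const].
  - apply (det_I_sub_burau_neq0 c sn Hcs n w); [exact Hw|exact (cheb_pos n theta Htheta)|].
    apply Cnorm2_Cexp_neq1. simpl. lra.
Qed.
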